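(* The Lagrange spectrum of $\mathbb{Q}((1/T))$ is $\mathbb{L}=\{1,2,3,\dots\}\cup\{\infty\}$.
   Context: $\mathbb{Q}((1/T))=\{\sum_{i=-\infty}^{m}a_iT^i: m\in\mathbb{Z},\ a_i\in\mathbb{Q}\}$ is the field of formal Laurent series in $1/T$ with rational coefficients. For nonzero $\alpha=\sum_{i\le m}a_iT^i$ with $a_m\neq0$, set $\deg\alpha=m$, and $\deg 0=-\infty$; on $\mathbb{Q}(T)$ this agrees with $\deg(P/Q)=\deg P-\deg Q$. For $\alpha\in\mathbb{Q}((1/T))$ not in $\mathbb{Q}(T)$, the Lagrange constant $l(\alpha)\in\mathbb{Z}\cup\{\infty\}$ is the supremum of the integers $k$ such that $\deg(\alpha-p/q)\le-2\deg q-k$ holds for infinitely many pairs $p,q\in\mathbb{Q}[T]$, $q\ne0$. The Lagrange spectrum is $\mathbb{L}=\{l(\alpha):\alpha\in\mathbb{Q}((1/T))\setminus\mathbb{Q}(T)\}$. *)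

From mathcomp Require Import all_boot all_order all_algebra.
Set Implicit Arguments. Unset Strict Implicit. Unset Printing Implicit Defensive.
Import Order.TTheory GRing.Theory Num.Theory.
Local Open Scope ring_scope.

(* Formal Laurent series in 1/T over Q: coefficient functions int -> rat
   whose support is bounded above. *)
Definition is_laurent (a : int -> rat) : Prop :=
  exists m : int, forall i : int, m < i -> a i = 0.

Definition deg_le (a : int -> rat) (d : int) : Prop :=
  forall i : int, d < i -> a i = 0.

Definition pdeg (q : {poly rat}) : int := ((size q).-1)%:Z.

Definition polyL (p : {poly rat}) (i : int) : rat :=
  match i with Posz n => p`_n | Negz _ => 0 end.

Definition pmulL (q : {poly rat}) (a : int -> rat) (i : int) : rat :=
  \sum_(j < size q) q`_j * a (i - (j : nat)%:Z).

Definition irrational (alpha : int -> rat) : Prop :=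
  ~ exists p q : {poly rat}, q != 0 /\ forall i, pmulL q alpha i = polyL p i.

(* (p, q) satisfies deg(alpha - p/q) <= -2 deg q - k, where p/q denotes the
   Laurent series beta with q * beta = p. *)
Definition good_approx (alpha : int -> rat) (k : int) (p q : {poly rat}) : Prop :=
  q != 0 /\
  exists beta : int -> rat,
    is_laurent beta /\ (forall i, pmulL q beta i = polyL p i) /\
    deg_le (fun i => alpha i - beta i) (- 2 * pdeg q - k).

(* Pairs are normalized (q monic, gcd(p,q)=1) so that distinct pairs are
   distinct rational functions p/q. *)
Definition approx_set (alpha : int -> rat) (k : int) (p q : {poly rat}) : Prop :=
  [/\ q \is monic, coprimep p q & good_approx alpha k p q].

Definition infinitely_many (alpha : int -> rat) (k : int) : Prop :=
  ~ exists s : seq ({poly rat} * {poly rat}),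
      forall p q, approx_set alpha k p q -> (p, q) \in s.

Inductive ezint := NInf | Fin of int | PInf.

Definition is_sup (S : int -> Prop) (x : ezint) : Prop :=
  match x with
  | NInf => forall k, ~ S k
  | Fin n => (forall k, S k -> k <= n) /\
             (forall m : int, (forall k, S k -> k <= m) -> n <= m)
  | PInf => forall n : int, exists k, S k /\ n <= k
  end.

Definition lagrange_const (alpha : int -> rat) (x : ezint) : Prop :=
  is_sup (infinitely_many alpha) x.

Definition lagrange_spectrum (x : ezint) : Prop :=
  exists alpha : int -> rat, is_laurent alpha /\ irrational alpha /\
    lagrange_const alpha x.

(* Dirichlet: for every N, a nonzero q of degree <= N with deg (q alpha - p) < -N exists,
   because the vanishing of the coefficients of q alpha at T^-1, ..., T^-N is a homogeneous
   linear system of N equations in N + 1 unknowns; reducing p/q then gives infinitely many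
   approximations with deg (alpha - p/q) <= -2 deg q - 1, so l(alpha) >= 1 for all alpha.
   Conversely, let alpha = [0; T^d_0, T^d_1, ...] with convergents P_k/Q_k and deg Q_k = D_k.
   Then deg (alpha - P_k/Q_k) = -2 D_k - d_k, and writing any q with D_k <= deg q < D_(k+1)
   as q = x Q_k + y Q_(k+1) shows deg (q alpha - p) >= -deg q - d_k.  Hence l(alpha) = n when
   d_k = n for all k, and l(alpha) = oo when d_k = k + 1. *)

From mathcomp Require Import all_boot all_order all_algebra.
From mathcomp Require Import zify ring.
From Stdlib Require Import Classical.
Import Order.TTheory GRing.Theory Num.Theory.
Set Implicit Arguments. Unset Strict Implicit. Unset Printing Implicit Defensive.
Local Open Scope ring_scope.

Implicit Types (p q g x y : {poly rat}) (a v : int -> rat).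

Lemma pmulL_widen q a i K : (size q <= K)%N ->
  pmulL q a i = \sum_(j < K) q`_j * a (i - j%:Z).
Proof.
move=> le_qK; rewrite /pmulL (big_ord_widen K (fun j : nat => q`_j * a (i - j%:Z))) //.
rewrite big_mkcond /=; apply: eq_bigr => j _; case: ltnP => // le_qj.
by rewrite nth_default // mul0r.
Qed.

Lemma eq_pmulL q a v : a =1 v -> pmulL q a =1 pmulL q v.
Proof. by move=> eq_av i; apply: eq_bigr => j _; rewrite eq_av. Qed.

Lemma pmulL0l a i : pmulL 0 a i = 0.
Proof. by rewrite /pmulL size_poly0 big_ord0. Qed.

Lemma pmulLDl q1 q2 a i : pmulL (q1 + q2) a i = pmulL q1 a i + pmulL q2 a i.
Proof.
set K := maxn (size q1) (size q2).
have le1 : (size q1 <= K)%N by rewrite leq_maxl.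
have le2 : (size q2 <= K)%N by rewrite leq_maxr.
have le12 : (size (q1 + q2)%R <= K)%N := size_polyD q1 q2.
rewrite (pmulL_widen a i le1) (pmulL_widen a i le2) (pmulL_widen a i le12) -big_split.
by apply: eq_bigr => j _; rewrite coefD mulrDl.
Qed.

Lemma pmulLCl c a i : pmulL c%:P a i = c * a i.
Proof.
have le1 : (size c%:P <= 1)%N by rewrite size_polyC leq_b1.
by rewrite (pmulL_widen a i le1) big_ord1 coefC subr0.
Qed.

Lemma pmulLXl q a i : pmulL (q * 'X) a i = pmulL q a (i - 1).
Proof.
have le_qX : (size (q * 'X)%R <= (size q).+1)%N.
  by rewrite (leq_trans (size_polyMleq _ _)) // size_polyX addn2.
rewrite (pmulL_widen a i le_qX) big_ord_recl coefMX mul0r add0r.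
by apply: eq_bigr => j _; rewrite coefMX /=; congr (_ * a _); rewrite /bump /=; lia.
Qed.

Lemma pmulLBr q a v i :
  pmulL q (fun j => a j - v j) i = pmulL q a i - pmulL q v i.
Proof. by rewrite /pmulL -sumrB; apply: eq_bigr => j _; rewrite mulrBr. Qed.

Lemma pmulLZl c q a i : pmulL (c *: q) a i = c * pmulL q a i.
Proof.
have [->|c_neq0] := eqVneq c 0; first by rewrite scale0r pmulL0l mul0r.
rewrite /pmulL size_scale // mulr_sumr.
by apply: eq_bigr => j _; rewrite coefZ mulrA.
Qed.

Lemma pmulLM q1 q2 a i : pmulL (q1 * q2) a i = pmulL q1 (pmulL q2 a) i.
Proof.
elim/poly_ind: q1 i => [|q c IHq] i; first by rewrite mul0r !pmulL0l.
rewrite mulrDl -mulrA (mulrC 'X) mulrA !pmulLDl !pmulLXl IHq pmulLCl.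
by rewrite mul_polyC pmulLZl.
Qed.

Lemma polyL0 i : polyL 0 i = 0.
Proof. by case: i => n //=; rewrite coef0. Qed.

Lemma polyLC c i : polyL c%:P i = if i == 0 then c else 0.
Proof. by case: i => [[|n]|n] //=; rewrite coefC. Qed.

Lemma polyLD p1 p2 i : polyL (p1 + p2) i = polyL p1 i + polyL p2 i.
Proof. by case: i => n /=; rewrite ?coefD ?addr0. Qed.

Lemma polyLB p1 p2 i : polyL (p1 - p2) i = polyL p1 i - polyL p2 i.
Proof. by case: i => n /=; rewrite ?coefB ?subr0. Qed.

Lemma polyL_lt0 p i : i < 0 -> polyL p i = 0.
Proof. by case: i. Qed.

Lemma polyLMXn p n i : polyL (p * 'X^n) i = polyL p (i - n%:Z).
Proof.
case: i => m; last by rewrite /= polyL_lt0 //; lia.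
rewrite /= coefMXn; case: ltnP => lt_mn.
  by have -> : m%:Z - n%:Z = Negz (n - m).-1 by lia.
by have -> : m%:Z - n%:Z = (m - n)%N by lia.
Qed.

Lemma polyL_ge_size p i : (size p)%:Z <= i -> polyL p i = 0.
Proof. by case: i => n //= le_pn; rewrite nth_default //; lia. Qed.

Lemma pmulL_polyL q p i : pmulL q (polyL p) i = polyL (q * p) i.
Proof.
elim/poly_ind: q i => [|q c IHq] i; first by rewrite pmulL0l mul0r polyL0.
rewrite pmulLDl pmulLXl pmulLCl IHq mulrDl polyLD -mulrA (mulrC 'X) mulrA.
rewrite -['X]expr1 polyLMXn; congr (_ + _).
by case: i => n; rewrite /= ?mulr0 // coefCM.
Qed.

Lemma pdegE q : q != 0 -> pdeg q = (size q)%:Z - 1.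
Proof. by move=> q_neq0; rewrite /pdeg; have := size_poly_gt0 q; rewrite q_neq0; lia. Qed.

Lemma pdeg_ge0 q : 0 <= pdeg q.
Proof. by []. Qed.

Lemma pdeg0 : pdeg 0 = 0.
Proof. by rewrite /pdeg size_poly0. Qed.

Lemma pdegD_lt x y : pdeg x < pdeg y -> pdeg (x + y) = pdeg y.
Proof. by rewrite /pdeg ltz_nat => lt_xy; rewrite addrC size_polyDl //; lia. Qed.

Lemma deg_le_trans v s t : s <= t -> deg_le v s -> deg_le v t.
Proof. by move=> le_st v_s i lt_ti; apply: v_s; lia. Qed.

Lemma deg_le_pmulL q v t : deg_le v t -> deg_le (pmulL q v) (t + pdeg q).
Proof.
move=> v_t i lt_i; rewrite /pmulL big1 // => j _.
by rewrite v_t ?mulr0 //; have := ltn_ord j; rewrite /pdeg in lt_i; lia.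
Qed.

Lemma pmulL_lead q v t : q != 0 -> deg_le v t ->
  pmulL q v (t + pdeg q) = lead_coef q * v t.
Proof.
move=> q_neq0 v_t; rewrite /pmulL /lead_coef /pdeg.
have : size q = (size q).-1.+1 by rewrite prednK // size_poly_gt0.
move: (size q).-1 => n ->; rewrite big_ord_recr big1 /=; first by rewrite add0r addrK.
by move=> j _; rewrite v_t ?mulr0 //; have := ltn_ord j; lia.
Qed.

Lemma deg_le_down v m t :
  deg_le v m -> (forall s, t < s -> deg_le v s -> v s = 0) -> deg_le v t.
Proof.
move=> v_m v_top.
have step n : deg_le v (t + n%:Z) -> deg_le v t.
  elim: n => [|n IHn] v_tn; first by rewrite addr0 in v_tn.
  apply: IHn => i lt_i; have [->|ne_i] := eqVneq i (t + n.+1%:Z).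
    by apply: v_top => //; lia.
  by apply: v_tn; lia.
by apply: (step `|m - t|%N); apply: deg_le_trans v_m; lia.
Qed.

Lemma deg_le_pmulL_inv q v t : q != 0 -> is_laurent v ->
  deg_le (pmulL q v) t -> deg_le v (t - pdeg q).
Proof.
move=> q_neq0 [m v_m] qv_t; apply: deg_le_down v_m _ => s lt_s v_s.
have := pmulL_lead q_neq0 v_s; rewrite qv_t; last by lia.
by move/esym/eqP; rewrite mulf_eq0 lead_coef_eq0 (negbTE q_neq0) => /eqP.
Qed.

Lemma laurentB a v : is_laurent a -> is_laurent v -> is_laurent (fun i => a i - v i).
Proof.
move=> [m a_m] [n v_n]; exists (Num.max m n) => i; rewrite gt_max => /andP[lt_mi lt_ni].
by rewrite a_m ?v_n ?subr0.
Qed.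

Lemma pmulL_laurent q a : is_laurent a -> is_laurent (pmulL q a).
Proof. by move=> [m a_m]; exists (m + pdeg q); apply: deg_le_pmulL. Qed.

Lemma polyL_laurent p : is_laurent (polyL p).
Proof. by exists (size p)%:Z => i lt_i; apply: polyL_ge_size; lia. Qed.

(* p/q is read off from the Euclidean division of p T^N by q, for N large. *)
Definition pdivL p q (i : int) : rat :=
  match i with
  | Posz n => (p %/ q)%R`_n
  | Negz n => ((p * 'X^(n.+1)) %/ q)%R`_0
  end.

Lemma coef_divp_mulXn p q N k j : q != 0 ->
  ((p * 'X^(N + k)) %/ q)`_(j + k) = ((p * 'X^N) %/ q)`_j.
Proof.
move=> q_neq0; set r : {poly rat} := (p * 'X^N) %% q.
have -> : p * 'X^(N + k) = ((p * 'X^N) %/ q * 'X^k) * q + r * 'X^k.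
  by rewrite exprD mulrA {1}(divp_eq (p * 'X^N) q); ring.
rewrite divpD mulpK // coefD coefMXn ltnNge leq_addl addnK.
have lt_rq : (size r < size q)%N by rewrite ltn_modp.
have size_rX : (size (r * 'X^k)%R <= size r + k)%N.
  by rewrite (leq_trans (size_polyMleq _ _)) // size_polyXn addnS.
rewrite [X in _ + X]nth_default ?addr0 // size_divp // leq_subLR.
by rewrite (leq_trans size_rX) // leq_add ?leq_addl // -ltnS prednK // (leq_ltn_trans _ lt_rq).
Qed.

Lemma pdivLE p q N n : q != 0 ->
  pdivL p q (n%:Z - N%:Z) = ((p * 'X^N) %/ q)`_n.
Proof.
move=> q_neq0; have [le_Nn|lt_nN] := leqP N n.
  have -> : n%:Z - N%:Z = (n - N)%N by lia.
  by have := coef_divp_mulXn p 0 N (n - N) q_neq0; rewrite expr0 mulr1 add0n subnK.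
have -> : n%:Z - N%:Z = Negz (N - n).-1 by lia.
have := coef_divp_mulXn p (N - n) n 0 q_neq0; rewrite subnK ?add0n 1?ltnW //.
by rewrite /= prednK ?subn_gt0.
Qed.

Lemma pdivL_laurent p q : is_laurent (pdivL p q).
Proof.
exists (size p)%:Z; case=> n //=; rewrite ltz_nat => lt_pn.
by rewrite nth_default // (leq_trans (leq_divp p q)) // ltnW.
Qed.

Lemma pmulL_pdivL p q : q != 0 -> pmulL q (pdivL p q) =1 polyL p.
Proof.
move=> q_neq0 i; set N := (`|i| + size q)%N; set r : {poly rat} := (p * 'X^N) %% q.
have -> : pmulL q (pdivL p q) i = pmulL q (polyL ((p * 'X^N) %/ q)) (i + N%:Z).
  apply: eq_bigr => j _; have := ltn_ord j => lt_jq.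
  have -> : i - j%:Z = (absz (i - j%:Z + N%:Z))%:Z - N%:Z by lia.
  by rewrite pdivLE //; have -> : i + N%:Z - j%:Z = absz (i - j%:Z + N%:Z) by lia.
rewrite pmulL_polyL.
have -> : q * ((p * 'X^N) %/ q) = p * 'X^N - r.
  by rewrite /r {2}(divp_eq (p * 'X^N) q); ring.
have lt_rq : (size r < size q)%N by rewrite ltn_modp.
by rewrite polyLB polyLMXn addrK (@polyL_ge_size r) ?subr0 // /N; lia.
Qed.

Definition resid a p q (i : int) : rat := pmulL q a i - polyL p i.

Lemma residD a p1 q1 p2 q2 i :
  resid a (p1 + p2) (q1 + q2) i = resid a p1 q1 i + resid a p2 q2 i.
Proof. by rewrite /resid pmulLDl polyLD; ring. Qed.

Lemma residM a g p q i : resid a (g * p) (g * q) i = pmulL g (resid a p q) i.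
Proof. by rewrite /resid pmulLBr pmulLM pmulL_polyL. Qed.

Lemma resid_laurent a p q : is_laurent a -> is_laurent (resid a p q).
Proof. by move=> a_laurent; apply: laurentB (pmulL_laurent _ a_laurent) (polyL_laurent _). Qed.

Lemma good_approx_resid a k p q : is_laurent a ->
  good_approx a k p q <-> q != 0 /\ deg_le (resid a p q) (- pdeg q - k).
Proof.
move=> a_laurent; split=> [[q_neq0 [b [_ [qb_p ab_deg]]]] | [q_neq0 res_deg]].
  split=> // i lt_i; have := deg_le_pmulL (q := q) ab_deg; rewrite /resid -qb_p -pmulLBr.
  by apply; lia.
split=> //; exists (pdivL p q); split; first exact: pdivL_laurent.
split; first exact: pmulL_pdivL.
have res_eq : pmulL q (fun i => a i - pdivL p q i) =1 resid a p q.
  by move=> i; rewrite pmulLBr pmulL_pdivL.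
have ab_deg : deg_le (fun i => a i - pdivL p q i) (- pdeg q - k - pdeg q).
  apply: deg_le_pmulL_inv => //; first exact: laurentB a_laurent (pdivL_laurent p q).
  by move=> i lt_i; rewrite res_eq res_deg.
by apply: deg_le_trans ab_deg; lia.
Qed.

Lemma approx_set_mono a k k' p q : k' <= k -> approx_set a k p q -> approx_set a k' p q.
Proof.
move=> le_k [q_monic cop_pq [q_neq0 [b [b_laurent [qb_p ab_deg]]]]]; split=> //.
by split=> //; exists b; split=> //; split=> //; apply: deg_le_trans ab_deg; lia.
Qed.

Lemma infinitely_many_of_unbounded_size a k :
  (forall B, exists p q, approx_set a k p q /\ (B < size q)%N) -> infinitely_many a k.
Proof.
move=> unbounded [s s_approx].
have [p [q [pq_approx]]] := unbounded (\max_(pq <- s) size pq.2)%N.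
apply/negP; rewrite -leqNgt.
exact: (@leq_bigmax_seq _ s xpredT (fun pq => size pq.2) _ (s_approx _ _ pq_approx)).
Qed.

Section ContinuedFraction.

Variable d : nat -> nat.
Hypothesis d_gt0 : forall k, (0 < d k)%N.

Fixpoint continuant (u0 u1 : {poly rat}) (k : nat) : {poly rat} :=
  match k with
  | 0 => u0
  | k1.+1 =>
    match k1 with
    | 0 => u1
    | k0.+1 => continuant u0 u1 k1 * 'X^(d k1) + continuant u0 u1 k0
    end
  end.

(* P k / Q k is the k-th convergent of the continued fraction
   [0; T^(d 0), T^(d 1), T^(d 2), ...]. *)
Definition P := continuant 0 1.
Definition Q := continuant 1 'X^(d 0).

Lemma PSS k : P k.+2 = P k.+1 * 'X^(d k.+1) + P k.
Proof. by []. Qed.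

Lemma QSS k : Q k.+2 = Q k.+1 * 'X^(d k.+1) + Q k.
Proof. by []. Qed.

Definition D k := (\sum_(j < k) d j)%N.

Lemma DS k : D k.+1 = (D k + d k)%N.
Proof. by rewrite /D big_ord_recr. Qed.

Lemma leq_D k : (k <= D k)%N.
Proof. by elim: k => // k IHk; rewrite DS; have := d_gt0 k; lia. Qed.

Lemma ltn_D k : (D k < D k.+1)%N.
Proof. by rewrite DS -[X in (X < _)%N]addn0 ltn_add2l. Qed.

Lemma leq_D_mono k j : (k <= j)%N -> (D k <= D j)%N.
Proof. by move=> le_kj; rewrite /D -(subnKC le_kj) big_split_ord leq_addr. Qed.

Lemma D_bracket e : exists k, (D k <= e < D k.+1)%N.
Proof.
elim: e => [|e [k /andP[le_ke lt_ek]]]; first by exists 0%N; rewrite DS /D big_ord0 d_gt0.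
have [lt_e1|le_e1] := ltnP e.+1 (D k.+1); first by exists k; rewrite lt_e1 leqW.
by exists k.+1; rewrite (DS k.+1); have := d_gt0 k.+1; lia.
Qed.

Lemma Q_monic_size k : Q k \is monic /\ size (Q k) = (D k).+1.
Proof.
suff [] : (Q k \is monic /\ size (Q k) = (D k).+1) /\
          (Q k.+1 \is monic /\ size (Q k.+1) = (D k.+1).+1) by [].
elim: k => [|k [[mon0 size0] [mon1 size1]]].
  by rewrite /D big_ord0 big_ord1 size_polyXn monicXn monic1 size_poly1.
split; first by split.
have size_QX : size (Q k.+1 * 'X^(d k.+1)) = (D k.+2).+1.
  by rewrite size_mulXn ?monic_neq0 // size1 (DS k.+1); lia.
have lt_size : (size (Q k) < size (Q k.+1 * 'X^(d k.+1))%R)%N.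
  by rewrite size_QX size0 (DS k.+1) (DS k); have := d_gt0 k.+1; lia.
rewrite QSS size_polyDl // size_QX; split=> //.
by rewrite monicE lead_coefDl // -monicE monicMr // monicXn.
Qed.

Lemma Q_neq0 k : Q k != 0.
Proof. by apply: monic_neq0; case: (Q_monic_size k). Qed.

Lemma pdegQ k : pdeg (Q k) = (D k)%:Z.
Proof. by rewrite /pdeg; case: (Q_monic_size k) => _ ->. Qed.

Lemma PQ_det k : P k * Q k.+1 - P k.+1 * Q k = ((-1) ^+ k.+1)%:P.
Proof.
elim: k => [|k IHk]; first by rewrite /P /Q /= mul0r mulr1 sub0r expr1 polyCN.
by rewrite PSS QSS exprS mulN1r polyCN -IHk; ring.
Qed.

Lemma coprimep_PQ k : coprimep (P k) (Q k).
Proof.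
apply/Bezout_eq1_coprimepP; pose c : {poly rat} := ((-1) ^+ k.+1)%:P.
exists (c * Q k.+1, - c * P k.+1) => /=.
have -> : c * Q k.+1 * P k + - c * P k.+1 * Q k = c * (P k * Q k.+1 - P k.+1 * Q k).
  by ring.
by rewrite PQ_det -polyCM -exprMn mulrNN mulr1 expr1n.
Qed.

Definition beta k := pdivL (P k) (Q k).

Lemma beta_succ_deg k :
  deg_le (fun i => beta k.+1 i - beta k i) (- (D k + D k.+1)%N%:Z) /\
  beta k.+1 (- (D k + D k.+1)%N%:Z) - beta k (- (D k + D k.+1)%N%:Z) != 0.
Proof.
set w := fun i => _; set R := Q k * Q k.+1.
have R_neq0 : R != 0 by rewrite mulf_neq0 ?Q_neq0.
have pdegR : pdeg R = (D k + D k.+1)%N.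
  rewrite /pdeg /R size_mul ?Q_neq0 //.
  by case: (Q_monic_size k) => _ ->; case: (Q_monic_size k.+1) => _ ->; lia.
have Rw i : pmulL R w i = polyL ((-1) ^+ k)%:P i.
  rewrite /w pmulLBr /R {2}[Q k * _]mulrC !pmulLM.
  rewrite !(eq_pmulL _ (pmulL_pdivL _ (Q_neq0 _))).
  rewrite !pmulL_polyL -polyLB; congr polyL.
  have -> : ((-1) ^+ k)%:P = - ((-1) ^+ k.+1)%:P :> {poly rat}.
    by rewrite exprS mulN1r polyCN opprK.
  by rewrite -PQ_det; ring.
have w_deg : deg_le w (- (D k + D k.+1)%N%:Z).
  rewrite -pdegR -sub0r; apply: deg_le_pmulL_inv => //.
    exact: laurentB (pdivL_laurent _ _) (pdivL_laurent _ _).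
  by move=> i lt_i; rewrite Rw polyLC; case: eqP => // i0; lia.
split=> //; apply/eqP => w0.
have := pmulL_lead R_neq0 w_deg; rewrite pdegR addNr Rw polyLC /w /= w0 mulr0.
by move/eqP; rewrite signr_eq0.
Qed.

Lemma beta_stable k j i : (k <= j)%N -> - (D k + D k.+1)%N%:Z < i -> beta j i = beta k i.
Proof.
elim: j => [|j IHj]; first by rewrite leqn0 => /eqP ->.
rewrite leq_eqVlt => /orP[/eqP <- //|le_kj] lt_i.
have [w_deg _] := beta_succ_deg j.
rewrite -(IHj le_kj lt_i); apply/eqP; rewrite -subr_eq0 w_deg //.
by have := leq_D_mono le_kj; have := leq_D_mono (le_kj : (k <= j)%N); lia.
Qed.

Definition alpha (i : int) : rat := beta (absz i) i.

Lemma alpha_beta k i : - (D k + D k.+1)%N%:Z < i -> alpha i = beta k i.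
Proof.
move=> lt_i; rewrite /alpha -(beta_stable (leq_maxl (absz i) k)); last first.
  by have := leq_D (absz i); have := leq_D (absz i).+1; lia.
exact: beta_stable (leq_maxr _ _) lt_i.
Qed.

Lemma alpha_laurent : is_laurent alpha.
Proof.
exists 0 => i lt0i; rewrite (@alpha_beta 0); last by lia.
by rewrite /beta /P /=; case: i lt0i => n //= _; rewrite div0p coef0.
Qed.

Lemma alpha_sub_beta k :
  deg_le (fun i => alpha i - beta k i) (- (D k + D k.+1)%N%:Z) /\
  alpha (- (D k + D k.+1)%N%:Z) - beta k (- (D k + D k.+1)%N%:Z) != 0.
Proof.
split=> [i lt_i|]; first by rewrite (alpha_beta lt_i) subrr.
rewrite (@alpha_beta k.+1); first by case: (beta_succ_deg k).
by rewrite (DS k.+1) (DS k); have := d_gt0 k; have := d_gt0 k.+1; lia.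
Qed.

Lemma resid_alpha_PQ k :
  deg_le (resid alpha (P k) (Q k)) (- (D k.+1)%:Z) /\
  resid alpha (P k) (Q k) (- (D k.+1)%:Z) != 0.
Proof.
have res_eq : resid alpha (P k) (Q k) =1 pmulL (Q k) (fun i => alpha i - beta k i).
  by move=> i; rewrite pmulLBr pmulL_pdivL ?Q_neq0.
have [ab_deg ab_neq0] := alpha_sub_beta k.
have -> : - (D k.+1)%:Z = - (D k + D k.+1)%N%:Z + pdeg (Q k) by rewrite pdegQ; lia.
split=> [i lt_i|]; first by rewrite res_eq (deg_le_pmulL ab_deg).
have [/monicP lead1 _] := Q_monic_size k.
by rewrite res_eq pmulL_lead ?Q_neq0 // lead1 mul1r.
Qed.

Lemma approx_PQ k : approx_set alpha (d k)%:Z (P k) (Q k).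
Proof.
split; [by case: (Q_monic_size k) | exact: coprimep_PQ |].
apply/(good_approx_resid _ _ _ alpha_laurent); split; first exact: Q_neq0.
by rewrite pdegQ (_ : _ - _ = - (D k.+1)%:Z); [case: (resid_alpha_PQ k) | rewrite DS; lia].
Qed.

Lemma alpha_irrational : irrational alpha.
Proof.
move=> [p0 [q0 [q0_neq0 q0_alpha]]]; set k := size q0.
have [res_deg res_neq0] := resid_alpha_PQ k.
have lt0 : - (D k.+1)%:Z + pdeg q0 < 0 by rewrite /pdeg; have := leq_D k.+1; lia.
have := pmulL_lead q0_neq0 res_deg; rewrite -residM {1}/resid mulrC pmulLM.
rewrite (eq_pmulL _ q0_alpha) pmulL_polyL !polyL_lt0 //.
by move/esym/eqP; rewrite subrr mulf_eq0 lead_coef_eq0 (negbTE q0_neq0) (negbTE res_neq0).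
Qed.

Lemma alpha_infinitely_many K :
  (forall k0, exists2 k, (k0 <= k)%N & K <= (d k)%:Z) -> infinitely_many alpha K.
Proof.
move=> unbounded; apply: infinitely_many_of_unbounded_size => B.
have [k le_Bk le_Kd] := unbounded B.
exists (P k), (Q k); split; first exact: approx_set_mono le_Kd (approx_PQ k).
by case: (Q_monic_size k) => _ ->; have := leq_D k; lia.
Qed.

Lemma PQ_coords k p q :
  exists x y, q = x * Q k + y * Q k.+1 /\ p = x * P k + y * P k.+1.
Proof.
pose c : {poly rat} := ((-1) ^+ k.+1)%:P.
have det : c * (P k * Q k.+1 - P k.+1 * Q k) = 1.
  by rewrite PQ_det -polyCM -exprMn mulrNN mulr1 expr1n.
exists (c * (p * Q k.+1 - q * P k.+1)), (c * (q * P k - p * Q k)).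
by split; rewrite -[LHS]mulr1 -det; ring.
Qed.

Lemma pdeg_mulQ x k : x != 0 -> pdeg (x * Q k) = pdeg x + (D k)%:Z.
Proof.
move=> x_neq0; rewrite !pdegE ?mulf_neq0 ?Q_neq0 // size_mul ?Q_neq0 //.
by case: (Q_monic_size k) => _ ->; rewrite addnS PoszD addrAC.
Qed.

Lemma PQ_coords_dominant k x y : x * Q k + y * Q k.+1 != 0 ->
  pdeg (x * Q k + y * Q k.+1) < (D k.+1)%:Z ->
  x != 0 /\ - (D k.+2)%:Z + pdeg y < - (D k.+1)%:Z + pdeg x.
Proof.
move=> q_neq0 lt_q; have lt_D := ltn_D k.+1.
have [y0 | y_neq0] := eqVneq y 0.
  split; last by rewrite y0 pdeg0; have := pdeg_ge0 x; lia.
  by apply: contraNneq q_neq0 => ->; rewrite y0 !mul0r addr0.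
have big_y : (D k.+1)%:Z <= pdeg (y * Q k.+1) by rewrite pdeg_mulQ //; have := pdeg_ge0 y; lia.
have le_yx : pdeg (y * Q k.+1) <= pdeg (x * Q k).
  by rewrite leNgt; apply/negP => /pdegD_lt eq_q; move: lt_q; rewrite eq_q; lia.
have x_neq0 : x != 0.
  by apply: contraTneq le_yx => ->; rewrite mul0r pdeg0 -ltNge; have := leq_D k.+1; lia.
by split=> //; move: le_yx; rewrite !pdeg_mulQ //; have := ltn_D k; lia.
Qed.

Lemma pmulL_dominant x y u v s t : x != 0 -> deg_le u s -> u s != 0 ->
  deg_le v t -> t + pdeg y < s + pdeg x ->
  pmulL x u (s + pdeg x) + pmulL y v (s + pdeg x) != 0.
Proof.
move=> x_neq0 u_s us_neq0 v_t lt_ts.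
by rewrite pmulL_lead // (deg_le_pmulL v_t) // addr0 mulf_neq0 ?lead_coef_eq0.
Qed.

(* Writing q = x Q_k + y Q_(k+1) with D_k <= deg q < D_(k+1), the term x (Q_k alpha - P_k)
   dominates q alpha - p and has degree deg x - D_(k+1) >= - deg q - d_k. *)
Lemma resid_alpha_not_small p q : q != 0 ->
  exists k, ~ deg_le (resid alpha p q) (- pdeg q - (d k)%:Z - 1).
Proof.
move=> q_neq0; have [k /andP[le_Dk lt_Dk]] := D_bracket (size q).-1.
have [le_Dq lt_Dq] : (D k)%:Z <= pdeg q /\ pdeg q < (D k.+1)%:Z.
  by rewrite /pdeg lez_nat ltz_nat.
exists k => small; have [x [y [q_xy p_xy]]] := PQ_coords k p q.
have [res0_deg res0_neq0] := resid_alpha_PQ k.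
have [res1_deg _] := resid_alpha_PQ k.+1.
rewrite q_xy in q_neq0 lt_Dq; have [x_neq0 lt_xy] := PQ_coords_dominant q_neq0 lt_Dq.
have := pmulL_dominant x_neq0 res0_deg res0_neq0 res1_deg lt_xy.
rewrite -!residM -residD -p_xy -q_xy small //.
by rewrite DS; have := pdeg_ge0 x; lia.
Qed.

Lemma alpha_no_good_approx n p q :
  (forall k, (d k <= n)%N) -> ~ good_approx alpha (n.+1)%:Z p q.
Proof.
move=> d_le /(good_approx_resid _ _ _ alpha_laurent) [q_neq0 res_small].
have [k] := resid_alpha_not_small p q_neq0; apply; apply: deg_le_trans res_small.
by have := d_le k; lia.
Qed.

Lemma lagrange_alpha_PInf :
  (forall (n : int) k0, exists2 k, (k0 <= k)%N & n <= (d k)%:Z) -> lagrange_const alpha PInf.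
Proof. by move=> unbounded n; exists n; split=> //; apply: alpha_infinitely_many. Qed.

Lemma lagrange_alpha_Fin n : (forall k, (d k <= n)%N) ->
  (forall k0, exists2 k, (k0 <= k)%N & (n <= d k)%N) -> lagrange_const alpha (Fin n).
Proof.
move=> d_le d_ge; split=> [k k_many | m m_ub].
  rewrite leNgt; apply/negP => lt_nk; apply: k_many; exists [::] => p q pq_approx.
  have le_k : (n.+1)%:Z <= k by lia.
  have [_ _ approx] := approx_set_mono le_k pq_approx.
  by case: (alpha_no_good_approx d_le approx).
apply: m_ub; apply: alpha_infinitely_many => k0.
by have [k le_k le_nd] := d_ge k0; exists k; rewrite ?lez_nat.
Qed.

End ContinuedFraction.

Lemma exists_small_resid a (N : nat) : is_laurent a ->
  exists p q, [/\ q != 0, (size q <= N.+1)%N & deg_le (resid a p q) (- N%:Z - 1)].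
Proof.
move=> a_laurent.
(* a row vector u in the left kernel of A gives q with vanishing coefficients
   of q a at -1, ..., -N *)
pose A : 'M[rat]_(N.+1, N) := \matrix_(j, i) a (- (i : nat)%:Z - 1 - (j : nat)%:Z).
have : kermx A != 0.
  by rewrite -mxrank_eq0 mxrank_ker; have := rank_leq_col A; lia.
case/rowV0Pn => u /sub_kermxP uA u_neq0.
pose q : {poly rat} := \poly_(j < N.+1) u 0 (inord j).
have q_neq0 : q != 0.
  apply: contra_neq u_neq0 => q0; apply/rowP => j; rewrite !mxE.
  by have := congr1 (fun r : {poly rat} => r`_j) q0; rewrite coef_poly ltn_ord inord_val coef0.
have size_q : (size q <= N.+1)%N by apply: size_poly.
have qa_neg i : (i < N)%N -> pmulL q a (- i%:Z - 1) = 0.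
  move=> lt_iN; rewrite (pmulL_widen a _ size_q).
  transitivity ((u *m A) 0 (Ordinal lt_iN)); last by rewrite uA mxE.
  rewrite mxE; apply: eq_bigr => j _; rewrite coef_poly ltn_ord inord_val mxE.
  by congr (_ * a _); lia.
have [m qa_m] := pmulL_laurent q a_laurent.
exists (\poly_(i < (absz m).+1) pmulL q a i%:Z), q; split=> // i lt_i.
rewrite /resid; case: i lt_i => [n|n] lt_n /=; last first.
  have -> : Negz n = - n%:Z - 1 by lia.
  by rewrite qa_neg ?subr0 //; lia.
rewrite coef_poly; case: ltnP => lt_nm; first by rewrite subrr.
by rewrite qa_m ?subrr //; lia.
Qed.

Lemma exists_reduced_resid a p q t : is_laurent a -> q != 0 -> deg_le (resid a p q) t ->
  exists p' q', [/\ q' \is monic, coprimep p' q', (size q' <= size q)%N &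
                   deg_le (resid a p' q') t].
Proof.
move=> a_laurent q_neq0 res_t; set g := gcdp p q.
have g_neq0 : g != 0 by rewrite gcdp_eq0 negb_and q_neq0 orbT.
set c := lead_coef (q %/ g).
have c_neq0 : c != 0.
  by rewrite lead_coef_eq0 divpN0 // leq_gcdpr.
have scaleK r : g %| r -> (c *: g) * (c^-1 *: (r %/ g)) = r.
  by move=> g_r; rewrite -scalerAl -scalerAr scalerA mulfV // scale1r mulrC divpK.
exists (c^-1 *: (p %/ g)), (c^-1 *: (q %/ g)); split.
- by rewrite monicE lead_coefZ mulVf.
- by rewrite coprimepZl ?coprimepZr ?invr_eq0 // coprimep_div_gcd // q_neq0 orbT.
- by rewrite size_scale ?invr_eq0 // leq_divp.
have h_neq0 : c *: g != 0 by rewrite scaler_eq0 negb_or c_neq0.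
have res_eq : pmulL (c *: g) (resid a (c^-1 *: (p %/ g)) (c^-1 *: (q %/ g))) =1 resid a p q.
  by move=> i; rewrite -residM !scaleK ?dvdp_gcdl ?dvdp_gcdr.
apply: deg_le_trans (deg_le_pmulL_inv (t := t) h_neq0 (resid_laurent _ _ a_laurent) _).
  by have := pdeg_ge0 (c *: g); lia.
by move=> i lt_i; rewrite res_eq res_t.
Qed.

Lemma exists_approx1_small_resid a (N : nat) : is_laurent a ->
  exists p q, approx_set a 1 p q /\ deg_le (resid a p q) (- N%:Z - 1).
Proof.
move=> a_laurent; have [p0 [q0 [q0_neq0 size_q0 res0]]] := exists_small_resid N a_laurent.
have [p [q [q_monic cop_pq size_q res]]] := exists_reduced_resid a_laurent q0_neq0 res0.
exists p, q; split=> //; split=> //; apply/good_approx_resid => //.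
split; first exact: monic_neq0.
have le_qN : pdeg q <= N%:Z.
  by rewrite /pdeg lez_nat -subn1 leq_subLR add1n (leq_trans size_q size_q0).
by apply: deg_le_trans res; lia.
Qed.

Lemma irrational_resid_neq0 a p q : irrational a -> q != 0 -> exists i, resid a p q i != 0.
Proof.
move=> a_irr q_neq0; apply: NNPP => res0; apply: a_irr; exists p, q; split=> // i.
by apply/eqP; rewrite -subr_eq0; apply/negPn/negP => res_i; apply: res0; exists i.
Qed.

Lemma exists_witness_lower_bound (T : eqType) (s : seq T) (P : T -> int -> Prop) :
  (forall z, z \in s -> exists i, P z i) ->
  exists M, forall z, z \in s -> exists2 i, M <= i & P z i.
Proof.
elim: s => [|z0 s IHs] s_P; first by exists 0.
have [M M_s] : exists M, forall z, z \in s -> exists2 i, M <= i & P z i.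
  by apply: IHs => z s_z; apply: s_P; rewrite inE s_z orbT.
have [i0 P_i0] := s_P z0 (mem_head z0 s).
exists (Num.min M i0) => z; rewrite inE => /predU1P[-> | s_z].
  by exists i0; rewrite ?ge_min ?lexx ?orbT.
by have [i le_Mi P_i] := M_s z s_z; exists i; rewrite ?ge_min ?le_Mi.
Qed.

Theorem dirichlet a : is_laurent a -> irrational a -> infinitely_many a 1.
Proof.
move=> a_laurent a_irr [s s_approx].
have [M M_s] : exists M, forall pq, pq \in s -> exists2 i, M <= i &
    approx_set a 1 pq.1 pq.2 -> resid a pq.1 pq.2 i != 0.
  apply: exists_witness_lower_bound => -[p q] _.
  have [[q_monic _ _] | not_approx] := classic (approx_set a 1 p q); last by exists 0.
  by have [i res_i] := irrational_resid_neq0 p a_irr (monic_neq0 q_monic); exists i.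
have [p [q [pq_approx res_small]]] := exists_approx1_small_resid (absz M) a_laurent.
have [i le_Mi /(_ pq_approx)] := M_s (p, q) (s_approx p q pq_approx).
by rewrite res_small ?eqxx //; lia.
Qed.

Unset Implicit Arguments.

Theorem corollary1 (x : ezint) :
  lagrange_spectrum x <-> (x = PInf \/ exists n : int, x = Fin n /\ 1 <= n).
Proof.
split=> [[a [a_laurent [a_irr a_x]]] | [-> | [n [-> le1n]]]].
- have many1 := dirichlet a_laurent a_irr.
  case: x a_x => [none | n [n_ub _] | _]; [by case: (none 1) | right | by left].
  by exists n; split=> //; apply: n_ub.
- have d_gt0 k : (0 < k.+1)%N by [].
  exists (alpha succn); split; first exact: alpha_laurent d_gt0.
  split; first exact: alpha_irrational d_gt0.
  apply: lagrange_alpha_PInf d_gt0 _ => m k0.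
  by exists (maxn k0 (absz m)); [exact: leq_maxl | have := leq_maxr k0 (absz m); lia].
- case: n le1n => // n le1n; have d_gt0 (k : nat) : (0 < n)%N by lia.
  exists (alpha (fun=> n)); split; first exact: alpha_laurent d_gt0.
  split; first exact: alpha_irrational d_gt0.
  by apply: (lagrange_alpha_Fin d_gt0) => [k | k0]; last exists k0.
Qed.
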